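(* In $K_2^M(\mathbb{Q}(E_{64}))\otimes\mathbb{Q}$ one has $$p_*(e_4)=\left\{\frac{v-2u}{v},\ \frac{32u^2}{(u-2)^2v^2}\right\}+\left\{\frac{(u-2)^2}{u^2+4},\ -\frac{v}{2u}\right\}.$$
   Context: Let $X_4\colon x^4+y^4=1$ be the Fermat quartic over $\mathbb{Q}$, with Ross element $e_4=\{1-x,1-y\}\in K_2^M(\mathbb{Q}(X_4))\otimes\mathbb{Q}$. Let $E_{64}\colon v^2=u^3-4u$, and let $p\colon X_4\to E_{64}$ be the degree-$2$ morphism $(u_0:v_0:w_0)=(2x_0(y_0^2+z_0^2):4y_0(y_0^2+z_0^2):x_0^3)$, i.e. $u=2(y^2+1)/x^2$, $v=4y(y^2+1)/x^3$. The map $p_*$ is the Milnor $K$-theory transfer $\mathrm{Tr}_{\mathbb{Q}(X_4)/\mathbb{Q}(E_{64})}$ for the extension of function fields induced by $p$. *)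

From HB Require Import structures.
From mathcomp Require Import all_boot all_order all_algebra.
Set Implicit Arguments. Unset Strict Implicit. Unset Printing Implicit Defensive.
Import Order.TTheory GRing.Theory Num.Theory.
Local Open Scope ring_scope.

(* K_2^M(K) (x) Q is the universal target of such symbols; an identity in
   K_2^M(K) (x) Q holds iff it holds after applying every such symbol. *)
Definition steinberg (K : fieldType) (W : lmodType rat) (s : K -> K -> W) : Prop :=
  [/\ forall a a' b, a != 0 -> a' != 0 -> b != 0 -> s (a * a') b = s a b + s a' b,
      forall a b b', a != 0 -> b != 0 -> b' != 0 -> s a (b * b') = s a b + s a b'
    & forall a, a != 0 -> a != 1 -> s a (1 - a) = 0].

(* Evaluation of a bivariate rational polynomial P(X,Y) (as {poly {poly rat}},
   outer variable Y) at (a, b) in a characteristic-zero field K. *)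
Definition eval2 (K : fieldType) (P : {poly {poly rat}}) (a b : K) : K :=
  (map_poly (fun r : {poly rat} => (map_poly (@ratr K) r).[a]) P).[b].

(* Put c = v/(2u). Its pullback is y/x, so 1 - y = 1 - c x, and the Steinberg
   relation for (1 - y)/(1 - c), whose complement is c (x - 1)/(1 - c), rewrites
   {1 - x, 1 - y} as a combination of symbols whose first entry comes from F.
   The projection formula pushes these down to F, with second entries the norms
   N(1 - c x) = 8/(u^2 + 4) and N(1 - x) = (u - 2)^2/(u^2 + 4) (here x^2 lies
   in F and v^2 = u^3 - 4u); the relations {c, 1 - c} = {c, -c} = 0 in F then
   bring the result into the stated form. *)

From HB Require Import structures.
From mathcomp Require Import all_boot all_order all_algebra.
From mathcomp Require Import ring.
Set Implicit Arguments. Unset Strict Implicit. Unset Printing Implicit Defensive.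
Import Order.TTheory GRing.Theory Num.Theory.
Local Open Scope ring_scope.

Section SteinbergSymbol.
Variables (K : fieldType) (W : lmodType rat) (s : K -> K -> W).
Hypothesis hs : steinberg s.
Implicit Types a b c k m x C : K.

Lemma symbolMl a a' b : a != 0 -> a' != 0 -> b != 0 -> s (a * a') b = s a b + s a' b.
Proof. by case: hs => Ml _ _; apply: Ml. Qed.

Lemma symbolMr a b b' : a != 0 -> b != 0 -> b' != 0 -> s a (b * b') = s a b + s a b'.
Proof. by case: hs => _ Mr _; apply: Mr. Qed.

Lemma symbol_1sub a : a != 0 -> a != 1 -> s a (1 - a) = 0.
Proof. by case: hs => _ _ st; apply: st. Qed.

Lemma symbol1l b : b != 0 -> s 1 b = 0.
Proof.
by move=> b0; apply: (addrI (s 1 b)); rewrite addr0 -symbolMl ?oner_neq0 ?mulr1.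
Qed.

Lemma symbol1r a : a != 0 -> s a 1 = 0.
Proof.
by move=> a0; apply: (addrI (s a 1)); rewrite addr0 -symbolMr ?oner_neq0 ?mulr1.
Qed.

Lemma symbolVl a b : a != 0 -> b != 0 -> s a^-1 b = - s a b.
Proof.
move=> a0 b0; apply/eqP; rewrite -addr_eq0 -symbolMl ?invr_eq0 //.
by rewrite mulVf // symbol1l.
Qed.

Lemma symbolVr a b : a != 0 -> b != 0 -> s a b^-1 = - s a b.
Proof.
move=> a0 b0; apply/eqP; rewrite -addr_eq0 -symbolMr ?invr_eq0 //.
by rewrite mulVf // symbol1r.
Qed.

(* The symbols with -1 are 2-torsion, hence vanish since W is a Q-vector space. *)
Lemma twice_eq0 (w : W) : w + w = 0 -> w = 0.
Proof. by move/eqP; rewrite -mulr2n -scaler_nat scaler_eq0 pnatr_eq0 => /eqP. Qed.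

Lemma symbolN1l b : b != 0 -> s (-1) b = 0.
Proof.
move=> b0; apply: twice_eq0.
by rewrite -symbolMl ?oppr_eq0 ?oner_neq0 // mulrNN mulr1 symbol1l.
Qed.

Lemma symbolN1r a : a != 0 -> s a (-1) = 0.
Proof.
move=> a0; apply: twice_eq0.
by rewrite -symbolMr ?oppr_eq0 ?oner_neq0 // mulrNN mulr1 symbol1r.
Qed.

Lemma symbolNl a b : a != 0 -> b != 0 -> s (- a) b = s a b.
Proof.
by move=> a0 b0; rewrite -mulN1r symbolMl ?oppr_eq0 ?oner_neq0 // symbolN1l ?add0r.
Qed.

Lemma symbolNr a b : a != 0 -> b != 0 -> s a (- b) = s a b.
Proof.
by move=> a0 b0; rewrite -mulN1r symbolMr ?oppr_eq0 ?oner_neq0 // symbolN1r ?add0r.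
Qed.

(* -a = (1 - a) / (1 - a^-1), so {a, -a} = {a, 1 - a} + {a^-1, 1 - a^-1} = 0. *)
Lemma symbolNid a : a != 0 -> s a (- a) = 0.
Proof.
move=> a0; have [/eqP ->|a1] := boolP (a == 1).
  by rewrite symbol1l ?oppr_eq0 ?oner_neq0.
have ai0 : a^-1 != 0 by rewrite invr_eq0.
have ai1 : a^-1 != 1 by rewrite invr_eq1.
have b0 : 1 - a != 0 by rewrite subr_eq0 eq_sym.
have b'0 : 1 - a^-1 != 0 by rewrite subr_eq0 eq_sym.
have -> : - a = (1 - a) / (1 - a^-1) by field; rewrite a0 subr_eq0 a1.
rewrite symbolMr ?invr_eq0 // symbolVr // (symbol_1sub a0 a1).
by rewrite -{1}[a]invrK symbolVl // (symbol_1sub ai0 ai1) oppr0 subr0.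
Qed.

Lemma symbol_diag a : a != 0 -> s a a = 0.
Proof. by move=> a0; rewrite -symbolNr // symbolNid. Qed.

Lemma symbol_anti a b : a != 0 -> b != 0 -> s a b = - s b a.
Proof.
move=> a0 b0; apply/eqP; rewrite -addr_eq0.
have := symbol_diag (mulf_neq0 a0 b0).
by rewrite symbolMl ?mulf_neq0 // !symbolMr // !symbol_diag // add0r addr0 => ->.
Qed.

Lemma symbol_1subC a : a != 0 -> a != 1 -> s (1 - a) a = 0.
Proof.
move=> a0 a1; rewrite symbol_anti ?symbol_1sub ?oppr0 //.
by rewrite subr_eq0 eq_sym.
Qed.

(* Steinberg relation for B = (1 - C x)/(1 - C), where 1 - B = C (x - 1)/(1 - C). *)
Lemma symbol_1sub_dilate C x : C != 0 -> C != 1 -> 1 - x != 0 -> 1 - C * x != 0 ->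
  s (1 - x) (1 - C * x) = s (1 - C) (1 - C * x) - s C (1 - C * x) - s (1 - C) (1 - x).
Proof.
move=> C0 C1 x1 y1.
have C'0 : 1 - C != 0 by rewrite subr_eq0 eq_sym.
have x'0 : x - 1 != 0 by rewrite -opprB oppr_eq0.
have B0 : (1 - C * x) / (1 - C) != 0 by rewrite mulf_neq0 ?invr_eq0.
have B' : 1 - (1 - C * x) / (1 - C) = C * (x - 1) / (1 - C) by field.
have C'i0 : (1 - C)^-1 != 0 by rewrite invr_eq0.
have Cx0 : C * (x - 1) != 0 by rewrite mulf_neq0.
have B1 : (1 - C * x) / (1 - C) != 1.
  by rewrite -subr_eq0 -opprB oppr_eq0 B' mulf_neq0.
have := symbol_1sub B0 B1; rewrite B'.
rewrite symbolMl ?mulf_neq0 // symbolVl ?mulf_neq0 //.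
rewrite !symbolMr // !symbolVr // -[x - 1]opprB !symbolNr //.
rewrite symbol_1subC // symbol_diag //.
rewrite (symbol_anti y1 C0) (symbol_anti y1 x1) (symbol_anti y1 C'0) add0r subr0 opprK.
move/eqP; rewrite subr_eq0 addrC addrA => /eqP <-.
by rewrite opprB subrKC.
Qed.

Lemma symbol_rearrange c k m : c != 0 -> c != 1 -> k != 0 -> m != 0 ->
  s (1 - c) k - s c k - s (1 - c) m = s ((c - 1) / c) (k / (c ^+ 2 * m)) + s m (- c).
Proof.
move=> c0 c1 k0 m0.
have c'0 : 1 - c != 0 by rewrite subr_eq0 eq_sym.
have ci0 : c^-1 != 0 by rewrite invr_eq0.
have ci1 : c^-1 != 1 by rewrite invr_eq1.
have c1' : c - 1 != 0 by rewrite subr_eq0.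
have a0 : (c - 1) / c != 0 by rewrite mulf_neq0 ?invr_eq0.
have c2m0 : c ^+ 2 * m != 0 by rewrite mulf_neq0 ?expf_neq0.
have sa (X : K) : X != 0 -> s ((c - 1) / c) X = s (1 - c) X - s c X.
  by move=> X0; rewrite symbolMl // symbolVl // -[c - 1]opprB symbolNl.
have sac : s ((c - 1) / c) c = 0.
  have -> : (c - 1) / c = 1 - c^-1 by field.
  by rewrite -{2}[c]invrK symbolVr ?symbol_1subC ?oppr0 // subr_eq0 eq_sym.
rewrite symbolMr ?invr_eq0 // symbolVr // symbolMr ?expf_neq0 // expr2 symbolMr //.
rewrite sac !sa // symbolNr // (symbol_anti m0 c0) //.
by rewrite !add0r -[RHS]addrA -opprD subrK.
Qed.

End SteinbergSymbol.

Section QuadraticExtension.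
Variables (F L : fieldType) (iota : {rmorphism F -> L}) (x : L) (d : F).
Variables (W : lmodType rat) (s : F -> F -> W) (t : L -> L -> W).
Hypotheses (hs : steinberg s) (ht : steinberg t).
(* The projection formula for L = F(x) with x^2 = d: N(p + q x) = p^2 - q^2 d. *)
Hypothesis t_iota_norm : forall a p q : F, a != 0 -> iota p + iota q * x != 0 ->
  t (iota a) (iota p + iota q * x) = s a (p ^+ 2 - q ^+ 2 * d).

Lemma symbol_1sub_norm (c : F) :
    c != 0 -> c != 1 -> 1 - x != 0 -> 1 - iota c * x != 0 ->
    1 - c ^+ 2 * d != 0 -> 1 - d != 0 ->
  t (1 - x) (1 - iota c * x)
  = s ((c - 1) / c) ((1 - c ^+ 2 * d) / (c ^+ 2 * (1 - d))) + s (1 - d) (- c).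
Proof.
move=> c0 c1 x1 y1 k0 m0.
have C0 : iota c != 0 by rewrite fmorph_eq0.
have C1 : iota c != 1 by rewrite fmorph_eq1.
have c'0 : 1 - c != 0 by rewrite subr_eq0 eq_sym.
have ex : 1 - x = iota 1 + iota (-1) * x by rewrite rmorph1 rmorphN1 mulN1r.
have ey : 1 - iota c * x = iota 1 + iota (- c) * x by rewrite rmorph1 rmorphN mulNr.
have eC : 1 - iota c = iota (1 - c) by rewrite rmorphB rmorph1.
rewrite symbol_1sub_dilate // eC ex !ey !t_iota_norm -?ex -?ey //.
by rewrite sqrrN expr1n sqrrN expr1n mul1r symbol_rearrange.
Qed.

End QuadraticExtension.

Section FermatQuartic.
Variables (L : fieldType) (x y : L).
Hypothesis charL : [pchar L] =i pred0.
Hypothesis fermat : x ^+ 4 + y ^+ 4 = 1.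
Hypothesis x_transcendental :
  forall p : {poly rat}, p != 0 -> (map_poly (@ratr L) p).[x] != 0.

(* The polynomial a X^n - b is built over int: ratr is a ring morphism only on
   numeric fields, whereas intr is one on every ring. *)
Lemma transcendental_natrX_neq (a b n : nat) :
  a != 0%N -> (0 < n)%N -> a%:R * x ^+ n != b%:R.
Proof.
move=> a0 n0; pose q : {poly int} := a%:R *: 'X^n - (b%:R)%:P.
have qn : q`_n = a%:R by rewrite coefB coefZ coefXn coefC eqxx mulr1 gtn_eqF // subr0.
have p0 : map_poly intr q != 0 :> {poly rat}.
  apply: contra a0 => /eqP /(congr1 (fun p : {poly rat} => p`_n)) /eqP.
  by rewrite coef_map qn coef0 /= mulrz_nat pnatr_eq0.
have := x_transcendental p0.
rewrite -map_poly_comp_id0 ?(ratr_nat L 0) // (eq_map_poly (@ratr_int L)).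
by rewrite rmorphB /= map_polyZ map_polyXn map_polyC !hornerE /= !mulrz_nat subr_eq0.
Qed.

Lemma transcendental_neq0 : x != 0.
Proof. by have := @transcendental_natrX_neq 1 0 1 isT isT; rewrite mulr1n mul1r. Qed.

Lemma transcendental_neq1 : x != 1.
Proof. by have := @transcendental_natrX_neq 1 1 1 isT isT; rewrite mulr1n mul1r. Qed.

Lemma fermat_y_neq0 : y != 0.
Proof.
have := @transcendental_natrX_neq 1 1 4 isT isT; rewrite mulr1n mul1r.
by apply: contraNneq => y0; rewrite -fermat y0 expr0n addr0.
Qed.

Lemma fermat_y_neq1 : y != 1.
Proof.
apply: contraNneq transcendental_neq0 => y1.
suff : x ^+ 4 == 0 by rewrite expf_eq0.
by rewrite -(addrK (y ^+ 4) (x ^+ 4)) fermat y1 expr1n subrr.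
Qed.

Lemma fermat_y2D1_neq0 : y ^+ 2 + 1 != 0.
Proof.
apply: contraNneq transcendental_neq0 => /eqP; rewrite addr_eq0 => /eqP y2.
suff : x ^+ 4 == 0 by rewrite expf_eq0.
by rewrite -(addrK (y ^+ 4) (x ^+ 4)) fermat (exprM y 2 2) y2 sqrrN expr1n subrr.
Qed.

Lemma fermat_x_neq_y : x != y.
Proof.
have := @transcendental_natrX_neq 2 1 4 isT isT; rewrite mulr1n.
by apply: contraNneq => xy; rewrite mulr2n mulrDl mul1r {2}xy fermat.
Qed.

Lemma fermat_y2D1_neq_x2 : y ^+ 2 + 1 != x ^+ 2.
Proof.
apply/eqP => e; have y2 : y ^+ 2 = x ^+ 2 - 1 by rewrite -e addrK.
have : 2 * x ^+ 2 * (x ^+ 2 - 1) == 0.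
  apply/eqP; transitivity (x ^+ 4 + (x ^+ 2 - 1) ^+ 2 - 1); first by ring.
  by rewrite -y2 -exprM fermat subrr.
have x21 := @transcendental_natrX_neq 1 1 2 isT isT.
rewrite mulr1n mul1r -subr_eq0 in x21.
by rewrite !mulf_eq0 (pcharf0P L).1 // (negbTE transcendental_neq0) (negbTE x21).
Qed.

Section PullbackToE64.
Variables (F : fieldType) (iota : {rmorphism F -> L}) (u v : F).
Hypothesis iota_u : iota u = 2 * (y ^+ 2 + 1) / x ^+ 2.
Hypothesis iota_v : iota v = 4 * y * (y ^+ 2 + 1) / x ^+ 3.

Let x0 : x != 0 := transcendental_neq0.
Let y0 : y != 0 := fermat_y_neq0.
Let y2D10 : y ^+ 2 + 1 != 0 := fermat_y2D1_neq0.
Let natrL : forall n : nat, (n%:R == 0 :> L) = (n == 0)%N := (pcharf0P L).1 charL.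

Lemma E64_u_neq0 : u != 0.
Proof. by rewrite -(fmorph_eq0 iota) iota_u !mulf_neq0 ?invr_eq0 ?expf_neq0 ?natrL. Qed.

Lemma E64_v_neq0 : v != 0.
Proof. by rewrite -(fmorph_eq0 iota) iota_v !mulf_neq0 ?invr_eq0 ?expf_neq0 ?natrL. Qed.

Lemma E64_u_neq2 : u != 2.
Proof.
rewrite -subr_eq0 -(fmorph_eq0 iota) rmorphB rmorph_nat iota_u.
have -> : 2 * (y ^+ 2 + 1) / x ^+ 2 - 2 = 2 * (y ^+ 2 + 1 - x ^+ 2) / x ^+ 2 by field.
by rewrite !mulf_neq0 ?invr_eq0 ?expf_neq0 ?natrL ?subr_eq0 ?fermat_y2D1_neq_x2.
Qed.

Lemma E64_u2D4_neq0 : u ^+ 2 + 4 != 0.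
Proof.
rewrite -(fmorph_eq0 iota) rmorphD rmorphXn rmorph_nat iota_u.
have -> : (2 * (y ^+ 2 + 1) / x ^+ 2) ^+ 2 + 4 = 8 * (y ^+ 2 + 1) / x ^+ 4.
  apply/eqP; rewrite -subr_eq0; apply/eqP.
  transitivity (4 * (x ^+ 4 + y ^+ 4 - 1) / x ^+ 4); first by field.
  by rewrite fermat subrr mulr0 mul0r.
by rewrite !mulf_neq0 ?invr_eq0 ?expf_neq0 ?natrL.
Qed.

Lemma E64_on_curve : v ^+ 2 = u ^+ 3 - 4 * u.
Proof.
apply: (fmorph_inj iota); rewrite rmorphB !rmorphXn rmorphM rmorph_nat iota_u iota_v.
apply/eqP; rewrite -subr_eq0; apply/eqP.
transitivity (8 * (y ^+ 2 + 1) / x ^+ 6 * (x ^+ 4 + y ^+ 4 - 1)); first by field.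
by rewrite fermat subrr mulr0.
Qed.

Lemma E64_slope : iota (v / (2 * u)) * x = y.
Proof. by rewrite fmorph_div rmorphM rmorph_nat iota_u iota_v; field; rewrite x0 y2D10 natrL. Qed.

End PullbackToE64.

End FermatQuartic.

Theorem mainTheorem10
  (L F : fieldType) (iota : {rmorphism F -> L}) (x y : L) (u v : F) :
  (* L = Q(X_4): char 0, generated over Q by x, y with x^4 + y^4 = 1, x transcendental *)
  [pchar L] =i pred0 ->
  x ^+ 4 + y ^+ 4 = 1 ->
  (forall p : {poly rat}, p != 0 -> (map_poly (@ratr L) p).[x] != 0) ->
  (forall b : L, exists P Q : {poly {poly rat}},
       eval2 Q x y != 0 /\ b = eval2 P x y / eval2 Q x y) ->
  (* F = Q(E_64) = Q(u, v), embedded in L via p^* : u = 2(y^2+1)/x^2, v = 4y(y^2+1)/x^3 *)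
  iota u = 2 * (y ^+ 2 + 1) / x ^+ 2 ->
  iota v = 4 * y * (y ^+ 2 + 1) / x ^+ 3 ->
  (forall f : F, exists P Q : {poly {poly rat}},
       eval2 Q u v != 0 /\ f = eval2 P u v / eval2 Q u v) ->
  (* for every Steinberg symbol s on F (i.e. linear map out of K_2^M(F) (x) Q)
     and t = s o p_* (a Steinberg symbol on L satisfying the projection formula
     t({iota a, b}) = s({a, N_{L/F} b}), where N is the norm of L = F(x),
     x^2 = 4u/(u^2+4), w.r.t. the basis {1, x}) *)
  forall (W : lmodType rat) (s : F -> F -> W) (t : L -> L -> W),
    steinberg s -> steinberg t ->
    (forall a p q : F, a != 0 -> iota p + iota q * x != 0 ->
       t (iota a) (iota p + iota q * x)
       = s a (p ^+ 2 - q ^+ 2 * (4 * u / (u ^+ 2 + 4)))) ->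
    t (1 - x) (1 - y)
    = s ((v - 2 * u) / v) (32 * u ^+ 2 / ((u - 2) ^+ 2 * v ^+ 2))
      + s ((u - 2) ^+ 2 / (u ^+ 2 + 4)) (- v / (2 * u)).
Proof.
move=> charL fermat x_transc _ iota_u iota_v _ W s t hs ht t_iota_norm.
have natrF : forall n : nat, (n%:R == 0 :> F) = (n == 0)%N.
  by apply/pcharf0P => n; rewrite -(fmorph_pchar iota) charL.
have u0 := E64_u_neq0 charL fermat x_transc iota_u.
have v0 := E64_v_neq0 charL fermat x_transc iota_v.
have u2 : u - 2 != 0 by rewrite subr_eq0 (E64_u_neq2 charL fermat x_transc iota_u).
have u2D4 := E64_u2D4_neq0 charL fermat x_transc iota_u.
have slope := E64_slope charL fermat x_transc iota_u iota_v.
set c := v / (2 * u); set d := 4 * u / (u ^+ 2 + 4).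
have norm1y : 1 - c ^+ 2 * d = 8 / (u ^+ 2 + 4).
  rewrite /c /d expr_div_n (E64_on_curve fermat x_transc iota_u iota_v).
  by field; rewrite u0 u2D4 natrF.
have norm1x : 1 - d = (u - 2) ^+ 2 / (u ^+ 2 + 4) by rewrite /d; field; rewrite u2D4.
have c0 : c != 0 by rewrite /c mulf_neq0 ?invr_eq0 ?mulf_neq0 ?natrF.
have c1 : c != 1.
  rewrite -(fmorph_eq1 iota); apply: contraNneq (fermat_x_neq_y fermat x_transc) => c1.
  by rewrite -slope c1 mul1r.
have x1 : 1 - x != 0 by rewrite subr_eq0 eq_sym (transcendental_neq1 x_transc).
have y1 : 1 - y != 0 by rewrite subr_eq0 eq_sym (fermat_y_neq1 fermat x_transc).
rewrite -slope (symbol_1sub_norm hs ht t_iota_norm) ?norm1y ?norm1x ?slope //; last 2 first.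
- by rewrite mulf_neq0 ?invr_eq0 ?natrF.
- by rewrite mulf_neq0 ?invr_eq0 ?expf_neq0.
by congr (s _ _ + s _ _); rewrite ?mulNr //; field; rewrite ?u2 ?u2D4 v0 u0 natrF.
Qed.
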